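(* Let $G=(V,w)$ be a weighted graph and let $\mathcal{L}$ be a maximal cross-free family of cuts of $V$. Suppose that $w(\Delta(X))=c$ for every cut $\Delta(X)\in\mathcal{L}$. Then the minimum cut weight of $G$ is $c$.
   Context: $G=(V,w)$ has nonnegative weights $w$ on unordered pairs of distinct vertices. A cut is identified by an unordered bipartition $\{X,V\setminus X\}$ with $\emptyset\ne X\subsetneq V$; $\Delta(X)$ denotes the set of pairs with exactly one endpoint in $X$, and $w(\Delta(X))$ is the sum of their weights. Sets $X,Y\subseteq V$ cross if $X\cap Y$, $X\setminus Y$, $Y\setminus X$, $V\setminus(X\cup Y)$ are all nonempty; cuts cross if their shores cross. A family of cuts is cross-free if no two members cross, and maximal cross-free if no other cut (bipartition of $V$) can be added while keeping it cross-free. *)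

From HB Require Import structures.
From mathcomp Require Import all_boot all_order all_algebra.
Set Implicit Arguments. Unset Strict Implicit. Unset Printing Implicit Defensive.
Import Order.TTheory GRing.Theory Num.Theory.
Local Open Scope ring_scope.

(* Vertices: a finite type V.  Unordered pairs of distinct vertices are the
   2-element subsets of V; a weighting w assigns a value to every such pair
   (values on other sets are irrelevant). *)

Definition is_pair (V : finType) (e : {set V}) : bool := #|e| == 2%N.

Definition Delta (V : finType) (X : {set V}) : {set {set V}} :=
  [set e : {set V} | is_pair e && (#|e :&: X| == 1%N)].

Definition cutw (R : numDomainType) (V : finType) (w : {set V} -> R)
  (X : {set V}) : R := \sum_(e in Delta X) w e.

Definition shore (V : finType) (X : {set V}) : bool :=
  (X != set0) && (X != [set: V]).

Definition is_cut (V : finType) (C : {set {set V}}) : Prop :=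
  exists X : {set V}, shore X /\ C = [set X; ~: X].

Definition cross (V : finType) (X Y : {set V}) : bool :=
  [&& X :&: Y != set0, X :\: Y != set0, Y :\: X != set0
    & ~: (X :|: Y) != set0].

Definition cuts_cross (V : finType) (C D : {set {set V}}) : Prop :=
  exists X Y, [/\ X \in C, Y \in D & cross X Y].

Definition cross_free (V : finType) (L : {set {set {set V}}}) : Prop :=
  (forall C, C \in L -> is_cut C) /\
  (forall C D, C \in L -> D \in L -> ~ cuts_cross C D).

Definition maximal_cross_free (V : finType) (L : {set {set {set V}}}) : Prop :=
  cross_free L /\
  (forall C, is_cut C -> C \notin L -> ~ cross_free (C |: L)).

From HB Require Import structures.
From mathcomp Require Import all_boot all_order all_algebra.
From mathcomp Require Import lra zify.
Import Order.TTheory GRing.Theory Num.Theory.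
Local Open Scope ring_scope.
Set Implicit Arguments. Unset Strict Implicit.

(* Attainment is easy: a singleton shore crosses nothing, so by maximality
   it is a shore of [L].  For the lower bound [c <= w(Delta(X))] we argue by
   downward induction on [#|X|].  If [X] crosses no shore of [L], maximality
   puts [X] in [L].  Otherwise take a shore [Y] of [L] crossing [X] with
   [#|Y|] minimal; the minimality forces [X :&: Y] to cross no shore of [L],
   so it is a shore of [L] too.  Submodularity of the cut function (weights
   are nonnegative) then gives
     w(Delta(X :|: Y)) + c <= w(Delta(X)) + c,
   and [X :|: Y] is a strictly larger shore, to which induction applies. *)

Section Crossing.
Variable V : finType.
Implicit Types A B S W Y Z : {set V}.

Lemma crossE A B :
  cross A B = [&& A :&: B != set0, ~~ (A \subset B), ~~ (B \subset A)
                & A :|: B != setT].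
Proof. by rewrite /cross -!setD_eq0 -setCT (inj_eq (@setC_inj _)). Qed.

Lemma crossC A B : cross A B = cross B A.
Proof.
by rewrite !crossE setIC setUC; case: (A \subset B); case: (B \subset A).
Qed.

(* Crossing depends only on the cut, not on the chosen shore: complementing
   [B] permutes the four regions. *)
Lemma crossCr A B : cross A (~: B) = cross A B.
Proof.
rewrite /cross.
have -> : A :\: ~: B = A :&: B by rewrite setDE setCK.
have -> : ~: B :\: A = ~: (A :|: B) by rewrite setDE setCU setIC.
have -> : ~: (A :|: ~: B) = B :\: A by rewrite setCU setCK setDE setIC.
by rewrite -setDE andbCA (andbC (~: (A :|: B) != set0)).
Qed.

Lemma cross_pair S A B : A \in [set S; ~: S] -> cross A B = cross S B.
Proof. by rewrite !inE => /orP[]/eqP->; rewrite // crossC crossCr crossC. Qed.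

Lemma pair_memC S A : A \in [set S; ~: S] -> ~: A \in [set S; ~: S].
Proof. by rewrite !inE => /orP[]/eqP->; rewrite ?setCK eqxx ?orbT. Qed.

Lemma subset_ncross A B : A \subset B -> ~~ cross A B.
Proof. by rewrite crossE => ->; rewrite !andbF. Qed.

Lemma cross_irr A : cross A A = false.
Proof. exact/negbTE/subset_ncross. Qed.

Lemma ncross_cases A B : ~~ cross A B ->
  [\/ A :&: B = set0, A \subset B, B \subset A | A :|: B = setT].
Proof.
move=> ncAB; case: (eqVneq (A :&: B) set0) => [AB0|AB]; first exact: Or41.
case AB_sub: (A \subset B); first exact: Or42.
case BA_sub: (B \subset A); first exact: Or43.
by apply/Or44/eqP; move: ncAB; rewrite crossE AB AB_sub BA_sub /= negbK.
Qed.

Lemma ncross_nested Z Y : ~~ cross Z Y ->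
  exists2 W, W \in [set Z; ~: Z] & (W \subset Y) || (Y \subset W).
Proof.
have Zin : Z \in [set Z; ~: Z] by rewrite !inE eqxx.
case/ncross_cases => [ZY0|ZY|YZ|ZYT].
- exists (~: Z); first exact: pair_memC.
  by rewrite -disjoints_subset -setI_eq0 setIC ZY0 eqxx orbT.
- by exists Z; rewrite ?ZY.
- by exists Z; rewrite ?YZ ?orbT.
- exists (~: Z); first exact: pair_memC.
  by rewrite -[Y]setCK -disjoints_subset -setI_eq0 -setCU ZYT setCT eqxx.
Qed.

Lemma set1_ncross (v : V) Z : ~~ cross [set v] Z.
Proof. by rewrite crossE setI_eq0 disjoints1 sub1set; case: (v \in Z). Qed.

Lemma shore_set1 (v : V) : (1 < #|V|)%N -> shore [set v].
Proof.
move=> n1; apply/andP; split; first by apply/set0Pn; exists v; rewrite inE.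
by apply: contraTneq n1 => v1; rewrite -cardsT -v1 cards1.
Qed.

End Crossing.

Section CutFunction.
Variables (R : realDomainType) (V : finType) (w : {set V} -> R).
Implicit Types S X Y : {set V}.

Lemma card_pairI (u v : V) S : u != v ->
  #|[set u; v] :&: S| = ((u \in S) + (v \in S))%N.
Proof.
move=> uv; have -> : [set u; v] :&: S = [set x in [seq y <- [:: u; v] | y \in S]].
  by apply/setP => x; rewrite !inE mem_filter !inE andbC.
rewrite cardsE (card_uniqP _); last by rewrite filter_uniq //= inE uv.
by rewrite size_filter /= addn0.
Qed.

(* [cutw] as a sum over all pairs, so that cuts can be compared termwise. *)
Lemma cutwE S :
  cutw w S = \sum_(e | is_pair e) (if #|e :&: S| == 1%N then w e else 0).
Proof. by rewrite /cutw -big_mkcondr; apply: eq_bigl => e; rewrite inE. Qed.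

Lemma cutw_submod X Y : (forall e, is_pair e -> 0 <= w e) ->
  cutw w (X :|: Y) + cutw w (X :&: Y) <= cutw w X + cutw w Y.
Proof.
move=> w0; rewrite !cutwE -!big_split /=; apply: ler_sum => e pe.
have := w0 e pe; move: pe => /cards2P[u [v [uv ->]]].
rewrite !card_pairI // !inE.
by case: (u \in X); case: (v \in X); case: (u \in Y); case: (v \in Y) => /= h; lra.
Qed.

End CutFunction.

Section CrossFree.
Variables (V : finType) (L : {set {set {set V}}}).
Implicit Types S X Y Z : {set V}.

Definition lshore Y : bool := [exists C in L, Y \in C].

Hypothesis cfL : cross_free L.

Lemma lshoreC Y : lshore Y -> lshore (~: Y).
Proof.
case/exists_inP => C CL YC; apply/exists_inP; exists C => //.
by have [S [_ CE]] := cfL.1 C CL; move: YC; rewrite CE; apply: pair_memC.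
Qed.

Lemma lshore_ncross Y Z : lshore Y -> lshore Z -> ~~ cross Y Z.
Proof.
case/exists_inP => C CL YC /exists_inP[D DL ZD].
by apply/negP => cYZ; apply: (cfL.2 C D CL DL); exists Y, Z.
Qed.

Lemma cross_free_add S : shore S -> (forall Z, lshore Z -> ~~ cross S Z) ->
  cross_free ([set S; ~: S] |: L).
Proof.
move=> sS ncS; have inL D Y : D \in L -> Y \in D -> lshore Y.
  by move=> DL YD; apply/exists_inP; exists D.
split=> [D | D1 D2]; first by rewrite in_setU1 => /predU1P[->|/cfL.1]; [exists S|].
rewrite !in_setU1 => /predU1P[->|D1L] /predU1P[->|D2L] [X [Y [XD1 YD2 cXY]]];
  move: cXY.
- by rewrite (cross_pair _ XD1) crossC (cross_pair _ YD2) cross_irr.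
- by rewrite (cross_pair _ XD1) (negbTE (ncS _ (inL _ _ D2L YD2))).
- by rewrite crossC (cross_pair _ YD2) (negbTE (ncS _ (inL _ _ D1L XD1))).
- by move=> cXY; apply: (cfL.2 D1 D2 D1L D2L); exists X, Y.
Qed.

End CrossFree.

Section Maximal.
Variables (V : finType) (L : {set {set {set V}}}).
Implicit Types S W X Y Z : {set V}.
Hypothesis maxL : maximal_cross_free L.

Lemma lshore_complete S : shore S -> (forall Z, lshore L Z -> ~~ cross S Z) ->
  lshore L S.
Proof.
move=> sS ncS; case: (boolP ([set S; ~: S] \in L)) => [CL|CnL].
  by apply/exists_inP; exists [set S; ~: S]; rewrite // !inE eqxx.
by case: (maxL.2 _ (ex_intro _ S (conj sS erefl)) CnL (cross_free_add maxL.1 sS ncS)).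
Qed.

Lemma meet_lshore X Y : lshore L Y -> cross X Y ->
  (forall Z, lshore L Z -> (#|Z| < #|Y|)%N -> ~~ cross X Z) ->
  lshore L (X :&: Y).
Proof.
move=> lY cXY minY; move: (cXY); rewrite crossE => /and4P[XY0 _ _ XYT].
have sXY : shore (X :&: Y).
  apply/andP; split => //; apply: contra XYT; rewrite -!subTset => /subset_trans.
  by apply; apply: subset_trans (subsetIl X Y) (subsetUl X Y).
apply: lshore_complete => // Z lZ; apply/negP => cIZ.
have [W WZ nested] := ncross_nested (lshore_ncross maxL.1 lZ lY).
have lW : lshore L W.
  by move: WZ; rewrite !inE => /orP[]/eqP->; last exact: lshoreC maxL.1 _ lZ.
have cIW : cross (X :&: Y) W by rewrite crossC (cross_pair _ WZ) crossC.
have YnW : ~~ (Y \subset W).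
  apply: contraL cIW => YW; exact/subset_ncross/(subset_trans (subsetIr X Y)).
have WY : W \subset Y by move: nested; rewrite (negbTE YnW) orbF.
have ltWY : (#|W| < #|Y|)%N by apply: proper_card; rewrite properE WY.
case: (ncross_cases (minY W lW ltWY)) => [XW0|XW|WX|XWT].
- by move: cIW; rewrite crossE -setIA (setIC Y) setIA XW0 set0I eqxx.
- by move: cIW; apply/negP/subset_ncross/(subset_trans (subsetIl X Y)).
- by move: cIW; rewrite crossC; apply/negP/subset_ncross; rewrite subsetI WX.
- by move: XYT; rewrite -subTset -XWT setUS.
Qed.

End Maximal.

Section MinCut.
Variables (R : realFieldType) (V : finType) (w : {set V} -> R)
  (L : {set {set {set V}}}) (c : R).
Hypothesis w0 : forall e : {set V}, is_pair e -> 0 <= w e.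
Hypothesis maxL : maximal_cross_free L.
Hypothesis hcut : forall C, C \in L -> forall X, X \in C -> cutw w X = c.

Lemma cutw_lshore Y : lshore L Y -> cutw w Y = c.
Proof. by case/exists_inP => C CL YC; exact: hcut CL _ YC. Qed.

Lemma cutw_lower_bound X : shore X -> c <= cutw w X.
Proof.
have [n] := ubnP (#|V| - #|X|); elim: n X => // n IH X ltn sX.
case: (boolP [exists Z, lshore L Z && cross X Z]) => [/existsP[Z0 PZ0]|]; last first.
  rewrite negb_exists => /forallP noZ; rewrite cutw_lshore ?lexx //.
  apply: (lshore_complete maxL sX) => Z lZ; by have := noZ Z; rewrite lZ.
case: (@arg_minnP _ Z0 (fun Z => lshore L Z && cross X Z) (fun Z => #|Z|) PZ0)
  => Y /andP[lY cXY] minY.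
have lXY : lshore L (X :&: Y).
  apply: (meet_lshore maxL lY cXY) => Z lZ; apply: contraTN => cXZ.
  by rewrite -leqNgt; apply: minY; rewrite lZ.
move: (cXY); rewrite crossE => /and4P[_ _ nYX XYT].
have sXY : shore (X :|: Y).
  by case/andP: sX => X0 _; rewrite /shore setU_eq0 negb_and X0 XYT.
have ltXY : (#|X| < #|X :|: Y|)%N by apply: proper_card; rewrite setUC properUr.
have IHXY : c <= cutw w (X :|: Y).
  by apply: IH sXY; have := max_card (X :|: Y); lia.
have := cutw_submod X Y w0; rewrite (cutw_lshore lXY) (cutw_lshore lY); lra.
Qed.

End MinCut.

Theorem lemma9 (R : realFieldType) (V : finType) (w : {set V} -> R)
  (L : {set {set {set V}}}) (c : R) :
  (1 < #|V|)%N ->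
  (forall e : {set V}, is_pair e -> 0 <= w e) ->
  maximal_cross_free L ->
  (forall C, C \in L -> forall X, X \in C -> cutw w X = c) ->
  (forall X : {set V}, shore X -> c <= cutw w X) /\
  (exists X : {set V}, shore X /\ cutw w X = c).
Proof.
move=> n1 w0 maxL hcut; split; first exact: (cutw_lower_bound w0 maxL hcut).
have /card_gt0P[v _] := ltnW n1.
exists [set v]; split; first exact: shore_set1.
apply: (cutw_lshore hcut); apply: (lshore_complete maxL (shore_set1 v n1)) => Z _.
exact: set1_ncross.
Qed.
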